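(* Let $n\ge 3$, $R>0$, let $P$ be a nonnegative $C^1$ function on $(0,R)$ such that the equation $y''+\frac1r y'+P(r)y=0$ has a positive solution on $(0,R)$, and let $0\le\lambda\le n-2$. Then the pair $$\Big(r^{-\lambda},\ \Big(\frac{n-\lambda-2}{2}\Big)^2r^{-\lambda-2}+r^{-\lambda}P(r)\Big)$$ is an $n$-dimensional Bessel pair on $(0,R)$.
   Context: A pair $(V,W)$ of positive functions on $(0,R)$ is called an $n$-dimensional Bessel pair on $(0,R)$ if the equation $y''(r)+\big(\frac{n-1}{r}+\frac{V_r(r)}{V(r)}\big)y'(r)+\frac{W(r)}{V(r)}y(r)=0$ has a positive solution on $(0,R)$, where $V_r$ denotes the derivative of $V$. *)

From Stdlib Require Import Reals Lra.
Open Scope R_scope.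

Definition positive_solution_on (Rr : R) (a b : R -> R) : Prop :=
  exists y y1 y2 : R -> R,
    forall r, 0 < r < Rr ->
      derivable_pt_lim y r (y1 r) /\
      derivable_pt_lim y1 r (y2 r) /\
      0 < y r /\
      y2 r + a r * y1 r + b r * y r = 0.

Definition bessel_pair (n : nat) (Rr : R) (V W : R -> R) : Prop :=
  (forall r, 0 < r < Rr -> 0 < V r /\ 0 <= W r) /\
  exists Vr : R -> R,
    (forall r, 0 < r < Rr -> derivable_pt_lim V r (Vr r)) /\
    positive_solution_on Rr
      (fun r => (INR n - 1) / r + Vr r / V r)
      (fun r => W r / V r).

Definition C1_on (Rr : R) (P : R -> R) : Prop :=
  exists P' : R -> R,
    (forall r, 0 < r < Rr -> derivable_pt_lim P r (P' r)) /\
    (forall r, 0 < r < Rr -> continuity_pt P' r).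

From Stdlib Require Import Reals Lra.
Open Scope R_scope.

(* Put V(r) = r^(-lambda) and a = (n - lambda - 2)/2, so that
   V_r/V = -lambda/r and the Bessel-pair equation for (V,W) reads
       z'' + (2a+1)/r z' + (a^2/r^2 + P) z = 0.
   If y > 0 solves y'' + y'/r + P y = 0, the power substitution z = r^(-a) y
   turns that equation into this one, for EVERY real a (the r^(-a-2) y terms
   cancel and the remaining terms are r^(-a) (y'' + y'/r + P y)).  Positivity of W only needs P >= 0. *)

Lemma Rpower_pos (r c : R) : 0 < Rpower r c.
Proof. unfold Rpower; apply exp_pos. Qed.

Lemma Rpower_minus_one (r c : R) : 0 < r -> Rpower r (c - 1) = Rpower r c / r.
Proof.
  intros Hr.
  replace (Rpower r c) with (Rpower r ((c - 1) + 1)) by (f_equal; ring).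
  rewrite Rpower_plus, Rpower_1 by exact Hr.
  field; lra.
Qed.

Lemma Rpower_log_derivative (r c : R) :
  0 < r -> c * Rpower r (c - 1) / Rpower r c = c / r.
Proof.
  intros Hr; rewrite Rpower_minus_one by exact Hr.
  pose proof (Rpower_pos r c); field; lra.
Qed.

Lemma derivable_pt_lim_Rpower_mult (c : R) (g : R -> R) (r g' : R) :
  0 < r -> derivable_pt_lim g r g' ->
  derivable_pt_lim (fun x => Rpower x c * g x) r
    (c * (Rpower r (c - 1) * g r) + Rpower r c * g').
Proof.
  intros Hr Hg; rewrite <- Rmult_assoc.
  exact (derivable_pt_lim_mult (fun x => Rpower x c) g r _ _
           (derivable_pt_lim_power r c Hr) Hg).
Qed.

Lemma positive_solution_on_ext (Rr : R) (a b a' b' : R -> R) :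
  (forall r, 0 < r < Rr -> a r = a' r /\ b r = b' r) ->
  positive_solution_on Rr a b -> positive_solution_on Rr a' b'.
Proof.
  intros Hab [y [y1 [y2 Hy]]]; exists y, y1, y2.
  intros r Hr; destruct (Hab r Hr) as [<- <-]; exact (Hy r Hr).
Qed.

Lemma power_substitution (Rr a : R) (P : R -> R) :
  positive_solution_on Rr (fun r => 1 / r) P ->
  positive_solution_on Rr
    (fun r => (2 * a + 1) / r)
    (fun r => a ^ 2 / r ^ 2 + P r).
Proof.
  intros [y [y1 [y2 Hy]]].
  set (z1 := fun r => - a * (Rpower r (- a - 1) * y r) + Rpower r (- a) * y1 r).
  exists (fun r => Rpower r (- a) * y r), z1,
    (fun r => - a * ((- a - 1) * (Rpower r (- a - 1 - 1) * y r)
                     + Rpower r (- a - 1) * y1 r)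
              + (- a * (Rpower r (- a - 1) * y1 r) + Rpower r (- a) * y2 r)).
  intros r Hr; destruct (Hy r Hr) as [Dy [Dy1 [Hpos Eq]]].
  assert (r_pos : 0 < r) by lra.
  split; [| split; [| split]].
  - exact (derivable_pt_lim_Rpower_mult _ _ _ _ r_pos Dy).
  - apply derivable_pt_lim_plus.
    + apply derivable_pt_lim_scal, derivable_pt_lim_Rpower_mult; assumption.
    + apply derivable_pt_lim_Rpower_mult; assumption.
  - apply Rmult_lt_0_compat; [apply Rpower_pos | exact Hpos].
  - unfold z1.
    replace (y2 r) with (- (1 / r) * y1 r - P r * y r) by lra.
    rewrite !Rpower_minus_one by exact r_pos.
    pose proof (Rpower_pos r (- a)); field; lra.
Qed.

Theorem mainTheorem3 (n : nat) (Rr : R) (P : R -> R) (lambda : R) :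
  (3 <= n)%nat ->
  0 < Rr ->
  C1_on Rr P ->
  (forall r, 0 < r < Rr -> 0 <= P r) ->
  positive_solution_on Rr (fun r => 1 / r) P ->
  0 <= lambda <= INR n - 2 ->
  bessel_pair n Rr
    (fun r => Rpower r (- lambda))
    (fun r => ((INR n - lambda - 2) / 2) ^ 2 * Rpower r (- lambda - 2)
              + Rpower r (- lambda) * P r).
Proof.
  intros _ _ _ P_nonneg Hsol _.
  set (a := (INR n - lambda - 2) / 2).
  split.
  - intros r Hr; split; [apply Rpower_pos |].
    apply Rplus_le_le_0_compat; apply Rmult_le_pos.
    + apply pow2_ge_0.
    + left; apply Rpower_pos.
    + left; apply Rpower_pos.
    + exact (P_nonneg r Hr).
  - exists (fun r => - lambda * Rpower r (- lambda - 1)); split.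
    + intros r Hr; apply derivable_pt_lim_power; lra.
    + eapply positive_solution_on_ext; [| exact (power_substitution Rr a P Hsol)].
      intros r Hr; cbv beta; assert (r_pos : 0 < r) by lra.
      rewrite Rpower_log_derivative by exact r_pos.
      replace (- lambda - 2) with ((- lambda - 1) - 1) by ring.
      rewrite !Rpower_minus_one by exact r_pos.
      pose proof (Rpower_pos r (- lambda)).
      unfold a; split; field; lra.
Qed.
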